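(* For every positive integer $n$, the variety of complex $n$-dimensional nilpotent mono Leibniz algebras contains at least one rigid algebra.
   Context: An algebra is a Leibniz algebra if it satisfies $(xy)z=(xz)y+x(yz)$; it is a mono Leibniz algebra if every subalgebra generated by one element is a Leibniz algebra; it is nilpotent if for some $m$ every product of $m$ elements (any bracketing) vanishes. The variety is the Zariski-closed set of bilinear products on a fixed $n$-dimensional complex vector space $V$ (identified with structure constants in $\mathbb{C}^{n^3}$) satisfying these conditions, with $GL(V)$ acting by $(g*\mu)(x,y)=g\mu(g^{-1}x,g^{-1}y)$. An algebra is rigid if its $GL(V)$-orbit is Zariski-open in the variety. *)

(* Complex numbers are  C := R[i]  (mathcomp-real-closed
   `complex`) for an arbitrary  R : realType  (a complete archimedean ordered
   field, i.e. the real numbers), so C is the field of complex numbers. *)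
From HB Require Import structures.
From mathcomp Require Import all_boot all_order all_algebra.
From mathcomp Require Import reals.
From mathcomp Require complex.
From mathcomp Require mpoly.
Set Implicit Arguments. Unset Strict Implicit. Unset Printing Implicit Defensive.
Import Order.TTheory GRing.Theory Num.Theory.
Local Open Scope ring_scope.

Import complex.

Section Defs.
Variable F : fieldType.

(* A point of F^T is a function T -> F; polynomials have #|T| variables,
   variable i standing for the coordinate enum_val i. *)
Definition coords (T : finType) (x : T -> F) : 'I_#|T| -> F :=
  fun i => x (enum_val i).

Definition zeroset (T : finType) (S : mpoly.mpoly #|T| F -> Prop) (x : T -> F) : Prop :=
  forall p, S p -> mpoly.meval (coords x) p = 0.

(* O is Zariski-open relative to the subset X of F^T (subspace topology):
   X \ O is the trace on X of a Zariski-closed set V(S). *)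
Definition zariski_open_in (T : finType) (X O : (T -> F) -> Prop) : Prop :=
  exists S : mpoly.mpoly #|T| F -> Prop,
    forall x, X x -> (~ O x <-> zeroset S x).

(* mu (i, j, k) = coefficient of e_k in the product e_i e_j. *)
Local Notation triple n := (prod (prod 'I_n 'I_n) 'I_n).
Definition strconst n := triple n -> F.

Definition amul n (mu : strconst n) (x y : 'rV[F]_n) : 'rV[F]_n :=
  \row_k \sum_(i < n) \sum_(j < n) x 0 i * y 0 j * mu (i, j, k).

Definition is_leibniz_on n (mu : strconst n) (A : 'rV[F]_n -> Prop) : Prop :=
  forall x y z, A x -> A y -> A z ->
    amul mu (amul mu x y) z = amul mu (amul mu x z) y + amul mu x (amul mu y z).

Definition is_leibniz n (mu : strconst n) : Prop := is_leibniz_on mu (fun _ => True).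

Definition is_subalgebra n (mu : strconst n) (S : 'rV[F]_n -> Prop) : Prop :=
  [/\ S 0, (forall x y, S x -> S y -> S (x + y)),
      (forall (c : F) x, S x -> S (c *: x)) &
      (forall x y, S x -> S y -> S (amul mu x y))].

Definition gen_subalg n (mu : strconst n) (a : 'rV[F]_n) : 'rV[F]_n -> Prop :=
  fun v => forall S, is_subalgebra mu S -> S a -> S v.

Definition is_mono_leibniz n (mu : strconst n) : Prop :=
  forall a, is_leibniz_on mu (gen_subalg mu a).

Inductive is_product n (mu : strconst n) : nat -> 'rV[F]_n -> Prop :=
| prod_leaf x : is_product mu 1 x
| prod_node k l x y : is_product mu k x -> is_product mu l y ->
    is_product mu (k + l) (amul mu x y).

Definition is_nilpotent n (mu : strconst n) : Prop :=
  exists m, (0 < m)%N /\ forall v, is_product mu m v -> v = 0.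

Definition nilMonoLeib n : strconst n -> Prop :=
  fun mu => is_nilpotent mu /\ is_mono_leibniz mu.

(* GL(V)-action (g*mu)(x,y) = g mu(g^-1 x, g^-1 y), where the linear map of
   the invertible matrix g is x |-> x *m g. *)
Definition gl_act n (g : 'M[F]_n) (mu : strconst n) : strconst n :=
  fun t => let: (i, j, k) := t in
    (amul mu (delta_mx 0 i *m invmx g) (delta_mx 0 j *m invmx g) *m g) 0 k.

Definition orbit n (mu : strconst n) : strconst n -> Prop :=
  fun nu => exists2 g : 'M[F]_n, g \in unitmx & nu = gl_act g mu.

Definition rigid_in n (X : strconst n -> Prop) (mu : strconst n) : Prop :=
  zariski_open_in (T := triple n) X (orbit mu).

End Defs.

From Pilot Require Import Defs.
From HB Require Import structures.
From mathcomp Require Import all_boot all_order all_algebra.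
From mathcomp Require Import reals.
From mathcomp Require complex.
From mathcomp Require Import mpoly ring zify.
From Stdlib Require Import FunctionalExtensionality.
Set Implicit Arguments. Unset Strict Implicit. Unset Printing Implicit Defensive.
Import Order.TTheory GRing.Theory Num.Theory.
Local Open Scope ring_scope.

(* The null-filiform algebra [nullfil], with e_i e_0 = e_(i+1) as its only
   nonzero products, lies in the variety, and its orbit there is the set of
   algebras having an element a whose right-normed power a^(n+1) is nonzero.
   Indeed, if a^(n+1) != 0, nilpotency and a dimension count force
   a^(n+2) = 0 and make a, a^2, ..., a^(n+1) a basis; the Leibniz identity on
   the subalgebra generated by a kills every product a^i a^j with j > 1, so
   this basis realises the multiplication table of [nullfil].  The complement
   of the orbit is then cut out by the coordinates of a^(n+1), which are
   polynomials in the structure constants. *)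

Section Bilinearity.
Variables (F : fieldType) (n : nat).
Implicit Types (mu nu : strconst F n) (x y z u v : 'rV[F]_n).

Lemma amulDl mu x y z : amul mu (x + y) z = amul mu x z + amul mu y z.
Proof.
apply/rowP=> k; rewrite !mxE -big_split /=; apply: eq_bigr => i _.
rewrite -big_split /=; apply: eq_bigr => j _; rewrite !mxE; ring.
Qed.

Lemma amulDr mu x y z : amul mu x (y + z) = amul mu x y + amul mu x z.
Proof.
apply/rowP=> k; rewrite !mxE -big_split /=; apply: eq_bigr => i _.
rewrite -big_split /=; apply: eq_bigr => j _; rewrite !mxE; ring.
Qed.

Lemma amulZl mu c x y : amul mu (c *: x) y = c *: amul mu x y.
Proof.
apply/rowP=> k; rewrite !mxE mulr_sumr; apply: eq_bigr => i _.
rewrite mulr_sumr; apply: eq_bigr => j _; rewrite !mxE; ring.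
Qed.

Lemma amulZr mu c x y : amul mu x (c *: y) = c *: amul mu x y.
Proof.
apply/rowP=> k; rewrite !mxE mulr_sumr; apply: eq_bigr => i _.
rewrite mulr_sumr; apply: eq_bigr => j _; rewrite !mxE; ring.
Qed.

Lemma amul0l mu y : amul mu 0 y = 0.
Proof. by have := amulZl mu 0 0 y; rewrite !scale0r. Qed.

Lemma amul0r mu x : amul mu x 0 = 0.
Proof. by have := amulZr mu 0 x 0; rewrite !scale0r. Qed.

Lemma amul_suml mu m (f : 'I_m -> 'rV[F]_n) y :
  amul mu (\sum_i f i) y = \sum_i amul mu (f i) y.
Proof. exact: (big_morph _ (fun x1 x2 => amulDl mu x1 x2 y) (amul0l mu y)). Qed.

Lemma amul_sumr mu m (f : 'I_m -> 'rV[F]_n) x :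
  amul mu x (\sum_i f i) = \sum_i amul mu x (f i).
Proof. exact: (big_morph _ (amulDr mu x) (amul0r mu x)). Qed.

Lemma amul_mulmx mu m (u v : 'rV[F]_m) (A B : 'M[F]_(m, n)) :
  amul mu (u *m A) (v *m B) =
  \sum_i \sum_j (u 0 i * v 0 j) *: amul mu (row i A) (row j B).
Proof.
rewrite (mulmx_sum_row u) (mulmx_sum_row v) amul_suml; apply: eq_bigr => i _.
rewrite amulZl amul_sumr scaler_sumr; apply: eq_bigr => j _.
by rewrite amulZr scalerA.
Qed.

Lemma amul_delta mu i j k : amul mu (delta_mx 0 i) (delta_mx 0 j) 0 k = mu (i, j, k).
Proof.
rewrite mxE (bigD1 i) //= addrC big1 ?add0r; last first.
  by move=> i' ne; apply: big1 => j' _; rewrite !mxE (negbTE ne) /= !mul0r.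
rewrite (bigD1 j) //= addrC big1 ?add0r; last first.
  by move=> j' ne; rewrite !mxE (negbTE ne) /= mulr0 mul0r.
by rewrite !mxE !eqxx /= !mul1r.
Qed.

Lemma amul_gl_act g mu u v :
  amul (gl_act g mu) u v = amul mu (u *m invmx g) (v *m invmx g) *m g.
Proof.
rewrite amul_mulmx mulmx_suml; apply/rowP => k; rewrite summxE mxE.
apply: eq_bigr => i _; rewrite mulmx_suml summxE; apply: eq_bigr => j _.
by rewrite -scalemxAl mxE /gl_act !rowE.
Qed.

Lemma amul_gl_act_unit g mu u v : g \in unitmx ->
  amul (gl_act g mu) (u *m g) (v *m g) = amul mu u v *m g.
Proof. by move=> gU; rewrite amul_gl_act !mulmxK. Qed.

(* A bilinear product is determined by its values on a basis, here the rows of [g]. *)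
Lemma gl_act_basis g mu nu : g \in unitmx ->
  (forall i j, amul nu (row i g) (row j g) = amul mu (delta_mx 0 i) (delta_mx 0 j) *m g) ->
  nu = gl_act g mu.
Proof.
move=> gU nu_rows.
have nu_g u v : amul nu (u *m g) (v *m g) = amul mu u v *m g.
  rewrite amul_mulmx -{2}(mulmx1 u) -{2}(mulmx1 v) amul_mulmx mulmx_suml.
  apply: eq_bigr => i _; rewrite mulmx_suml; apply: eq_bigr => j _.
  by rewrite nu_rows !row1 scalemxAl.
apply: functional_extensionality => -[[i j] k].
by rewrite /gl_act -amul_delta -nu_g !mulmxKV.
Qed.

End Bilinearity.

Section RightPowers.
Variables (R : pzSemiRingType) (d : nat).

(* [amul] is [ramul] over a field; the ring version carries polynomial
   structure constants. *)
Definition ramul (mu : prod (prod 'I_d 'I_d) 'I_d -> R) (x y : 'rV[R]_d) : 'rV[R]_d :=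
  \row_k \sum_(i < d) \sum_(j < d) x 0 i * y 0 j * mu (i, j, k).

(* [rpow mu a k] is the right-normed power (..((a a) a)..) a with k+1 factors. *)
Definition rpow mu (a : 'rV[R]_d) k := iter k (ramul mu ^~ a) a.

End RightPowers.

Lemma map_rpow (R S : pzSemiRingType) (f : {rmorphism R -> S}) d mu (a : 'rV[R]_d) k :
  map_mx f (rpow mu a k) = rpow (f \o mu) (map_mx f a) k.
Proof.
elim: k => [//|k IH] /=; rewrite -IH; apply/rowP => l; rewrite !mxE rmorph_sum.
apply: eq_bigr => i _; rewrite rmorph_sum; apply: eq_bigr => j _.
by rewrite !rmorphM !mxE.
Qed.

Lemma is_product_gt0 (F : fieldType) d (mu : strconst F d) k v :
  is_product mu k v -> (0 < k)%N.
Proof. by elim=> // k1 k2 x y _ k1_gt0 _ _; rewrite addn_gt0 k1_gt0. Qed.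

Lemma rpowS (F : fieldType) d (mu : strconst F d) a k :
  rpow mu a k.+1 = amul mu (rpow mu a k) a.
Proof. by []. Qed.

Section RightPowersField.
Variables (F : fieldType) (d : nat) (nu : strconst F d) (a : 'rV[F]_d).
Local Notation x := (rpow nu a).

Lemma rpow_gl_act g k : g \in unitmx -> rpow (gl_act g nu) (a *m g) k = x k *m g.
Proof. by move=> gU; elim: k => [//|k IH]; rewrite rpowS IH amul_gl_act_unit. Qed.

Lemma rpow_gen_subalg k : gen_subalg nu a (x k).
Proof. by move=> S [_ _ _ S_mul] Sa; elim: k => [//|k IH]; apply: S_mul. Qed.

Lemma rpow_is_product k : is_product nu k.+1 (x k).
Proof.
elim: k => [|k IH]; first exact: prod_leaf.
by rewrite rpowS -addn1; apply: prod_node IH (prod_leaf _ _).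
Qed.

Lemma iter_rmul_sum m p (c : 'I_p -> F) (v : 'I_p -> 'rV[F]_d) :
  iter m (amul nu ^~ a) (\sum_i c i *: v i) = \sum_i c i *: iter m (amul nu ^~ a) (v i).
Proof.
elim: m => [//|m IH] /=; rewrite IH amul_suml; apply: eq_bigr => i _.
by rewrite amulZl.
Qed.

Lemma iter_rmul0 m : iter m (amul nu ^~ a) 0 = 0.
Proof. by elim: m => [//|m IH] /=; rewrite IH amul0l. Qed.

Lemma iter_rmul_rpow m k : iter m (amul nu ^~ a) (x k) = x (m + k).
Proof. by rewrite /rpow iterD. Qed.

Lemma rpow_eq0_ge N k : x N = 0 -> (N <= k)%N -> x k = 0.
Proof.
by move=> xN0 /subnK <-; rewrite -iter_rmul_rpow xN0 iter_rmul0.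
Qed.

Definition rpowmx N : 'M[F]_(N.+1, d) := \matrix_(i, l) x i 0 l.

Lemma row_rpowmx N i : row i (rpowmx N) = x i.
Proof. by apply/rowP => l; rewrite !mxE. Qed.

(* Multiplying a vanishing combination of a, ..., a^(N+1) on the right by
   N - p copies of a isolates the coefficient of a^(p+1) times a^(N+1). *)
Lemma rpowmx_free N : x N != 0 -> x N.+1 = 0 -> row_free (rpowmx N).
Proof.
move=> xN_neq0 xN1_0; apply: inj_row_free => c c_rel.
suff c_lt p : (p <= N.+1)%N -> forall i : 'I_N.+1, (i < p)%N -> c 0 i = 0.
  by apply/rowP => i; rewrite mxE (c_lt N.+1).
elim: p => [//|p IH] p_le i; rewrite ltnS leq_eqVlt => /orP[/eqP i_p|]; last first.
  by apply: IH; apply: ltnW.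
have := congr1 (iter (N - p) (amul nu ^~ a)) c_rel.
rewrite mulmx_sum_row iter_rmul_sum iter_rmul0 (bigD1 i) //= big1 ?addr0; last first.
  move=> j j_neq_i; rewrite row_rpowmx iter_rmul_rpow.
  have [j_lt_p|p_le_j] := ltnP j p; first by rewrite IH ?scale0r // ltnW.
  have p_lt_j : (p < j)%N.
    by rewrite ltn_neqAle p_le_j andbT -i_p; apply: contra j_neq_i => /eqP/val_inj ->.
  by rewrite (rpow_eq0_ge xN1_0) ?scaler0 //; lia.
rewrite row_rpowmx iter_rmul_rpow i_p (subnK (p_le : (p <= N)%N)).
by move/eqP; rewrite scaler_eq0 (negbTE xN_neq0) orbF => /eqP.
Qed.

Lemma rpow_neq0_lt_dim N k : x (N + k) = 0 -> x N != 0 -> (N < d)%N.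
Proof.
elim: k N => [|k IH] N; first by rewrite addn0 => ->; rewrite eqxx.
move=> xNk0 xN_neq0; have [/eqP xN1_0|xN1_neq0] := boolP (x N.+1 == 0).
  by have /eqP <- := rpowmx_free xN_neq0 xN1_0; apply: rank_leq_col.
by apply: ltnW; apply: IH; rewrite // addSnnS.
Qed.

Lemma rpow_dim_eq0 : is_nilpotent nu -> x d = 0.
Proof.
move=> [m [m_gt0 prod0]]; have xm0 : x m.-1 = 0.
  by apply: prod0; rewrite -{1}(prednK m_gt0); apply: rpow_is_product.
apply/eqP; apply: contraT => xd_neq0.
by have := rpow_neq0_lt_dim (rpow_eq0_ge xm0 (leq_addl d _)) xd_neq0; rewrite ltnn.
Qed.

(* The Leibniz identity on a^(i+1), a^(j+1), a reads
   a^(i+1) a^(j+2) = (a^(i+1) a^(j+1)) a - a^(i+2) a^(j+1). *)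
Lemma amul_rpow_eq0 : is_leibniz_on nu (gen_subalg nu a) ->
  forall i j, (0 < j)%N -> amul nu (x i) (x j) = 0.
Proof.
move=> leib i j; elim: j i => [//|j IH] i _.
have := leib _ _ _ (rpow_gen_subalg i) (rpow_gen_subalg j) (rpow_gen_subalg 0).
rewrite -!rpowS; case: j IH => [|j] IH.
  rewrite [x 0]/= -rpowS => /(congr1 (fun w => w - x i.+2)).
  by rewrite subrr addrAC subrr add0r => <-.
by rewrite IH // amul0l (IH i.+1) // add0r => <-.
Qed.

End RightPowersField.

Section NullFiliform.
Variables (F : fieldType) (n : nat).

Definition shiftmx : 'M[F]_n.+1 := \matrix_(i, k) ((k : nat) == i.+1)%:R.

Definition nullfil : strconst F n.+1 :=
  fun '(i, j, k) => ((j == 0 :> nat) && (k == i.+1 :> nat))%:R.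

Lemma shiftmx_coord (x : 'rV[F]_n.+1) (l : 'I_n.+1) :
  (x *m shiftmx) 0 l = if (l : nat) is l'.+1 then x 0 (inord l') else 0.
Proof.
rewrite mxE; case: l => [[|l'] l_lt] /=.
  by apply: big1 => i _; rewrite mxE mulr0.
have l'_lt : (l' < n.+1)%N := ltnW l_lt.
rewrite (bigD1 (inord l')) //= addrC big1 ?add0r; last first.
  move=> i i_neq; rewrite mxE /= eqSS; case: eqP => [l'_i|]; last by rewrite mulr0.
  by move: i_neq; rewrite -(inj_eq val_inj) /= inordK // l'_i eqxx.
by rewrite mxE /= inordK // eqxx mulr1.
Qed.

Lemma amul_nullfil (x y : 'rV[F]_n.+1) : amul nullfil x y = y 0 0 *: (x *m shiftmx).
Proof.
apply/rowP => k; rewrite !mxE mulr_sumr; apply: eq_bigr => i _.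
rewrite (bigD1 0) //= addrC big1 ?add0r; last first.
  by move=> j j_neq0; rewrite /nullfil /= -[j == 0 :> nat]/(j == 0) (negbTE j_neq0) mulr0.
by rewrite /nullfil /= mxE; case: eqP; rewrite ?mulr1 ?mulr0 // mulrC.
Qed.

Lemma nullfil_leibniz : is_leibniz nullfil.
Proof.
move=> x y z _ _ _; rewrite !amul_nullfil mxE shiftmx_coord mulr0 scale0r addr0.
by rewrite -!scalemxAl !scalerA mulrC.
Qed.

Lemma rpow_nullfil k (l : 'I_n.+1) :
  rpow nullfil (delta_mx 0 0) k 0 l = ((l : nat) == k)%:R.
Proof.
elim: k l => [|k IH] l; first by rewrite mxE; case: l.
rewrite rpowS amul_nullfil mxE [delta_mx _ _ _ _]mxE eqxx mul1r shiftmx_coord.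
by case: l => [[|l'] l_lt] //=; rewrite IH inordK // ltnW.
Qed.

Lemma nullfil_product_coord k v : is_product nullfil k v ->
  forall l : 'I_n.+1, (l.+2 <= k)%N -> v 0 l = 0.
Proof.
elim=> [//|k1 k2 u w _ IHu w_prod IHw] l l_lt.
rewrite amul_nullfil mxE shiftmx_coord.
have [k2_gt1|k2_le1] := ltnP 1 k2; first by rewrite (IHw 0) ?mul0r.
have k2_1 : k2 = 1%N by apply/eqP; rewrite eqn_leq k2_le1 (is_product_gt0 w_prod).
move: l_lt; rewrite k2_1 addn1; case: l => [[|l'] l_lt] //= l_le; first by rewrite mulr0.
by rewrite IHu ?mulr0 // inordK // ltnW.
Qed.

Lemma nullfil_nilMonoLeib : nilMonoLeib nullfil.
Proof.
split; last by move=> a x y z _ _ _; apply: nullfil_leibniz.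
exists n.+2; split=> // v v_prod; apply/rowP => l.
by rewrite mxE (nullfil_product_coord v_prod) // ltnS.
Qed.

Lemma orbit_nullfil_rpow (nu : strconst F n.+1) :
  Defs.orbit nullfil nu -> exists a, rpow nu a n != 0.
Proof.
move=> [g gU ->]; exists (delta_mx 0 0 *m g); rewrite rpow_gl_act //.
apply: contra_neq (@oner_neq0 F) => /(congr1 (mulmx^~ (invmx g))).
rewrite mulmxK // mul0mx => /(congr1 (fun w : 'rV[F]_n.+1 => w 0 ord_max)).
by rewrite rpow_nullfil mxE /= eqxx.
Qed.

Lemma shiftmx_rpowmx (nu : strconst F n.+1) a i : rpow nu a n.+1 = 0 ->
  row i shiftmx *m rpowmx nu a n = rpow nu a i.+1.
Proof.
move=> xn1_0; apply/rowP => l; rewrite mxE.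
have [i1_lt|n_le_i] := ltnP i.+1 n.+1.
  rewrite (bigD1 (Ordinal i1_lt)) //= big1 ?addr0; last first.
    move=> k k_neq; rewrite !mxE; case: eqP => [k_i1|]; last by rewrite mul0r.
    by move: k_neq; rewrite -(inj_eq val_inj) /= k_i1 eqxx.
  by rewrite !mxE eqxx mul1r.
have i_n : i.+1 = n.+1 by apply/eqP; rewrite eqn_leq n_le_i ltn_ord.
rewrite i_n xn1_0 mxE big1 // => k _.
by rewrite !mxE i_n ltn_eqF ?mul0r.
Qed.

Lemma rpow_orbit_nullfil (nu : strconst F n.+1) a :
  nilMonoLeib nu -> rpow nu a n != 0 -> Defs.orbit nullfil nu.
Proof.
move=> [nu_nil nu_mono] xn_neq0.
have xn1_0 : rpow nu a n.+1 = 0 := rpow_dim_eq0 a nu_nil.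
have P_unit : rpowmx nu a n \in unitmx by rewrite -row_free_unit rpowmx_free.
exists (rpowmx nu a n) => //; apply: gl_act_basis => // i j.
rewrite !row_rpowmx amul_nullfil -rowE -scalemxAl shiftmx_rpowmx // mxE.
have [j0|j_gt0] := posnP j.
  by rewrite (_ : j = 0) ?eqxx ?scale1r //; apply/val_inj.
by rewrite (amul_rpow_eq0 (nu_mono a)) // -[0 == j]/(0%N == j) ltn_eqF ?scale0r.
Qed.

Lemma orbit_nullfilP (nu : strconst F n.+1) : nilMonoLeib nu ->
  Defs.orbit nullfil nu <-> exists a, rpow nu a n != 0.
Proof.
move=> nu_var; split; first exact: orbit_nullfil_rpow.
by move=> [a xn_neq0]; apply: rpow_orbit_nullfil xn_neq0.
Qed.

End NullFiliform.

Section Rigidity.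
Variables (F : fieldType) (n : nat).

Definition coord_var (T : finType) (t : T) : {mpoly F[#|T|]} := 'X_(enum_rank t).

Lemma meval_rpow_coord_var (nu : strconst F n.+1) a k l :
  meval (coords nu) (rpow (@coord_var _) (map_mx (mpolyC _ (R := F)) a) k 0 l)
  = rpow nu a k 0 l.
Proof.
have -> : rpow nu a k
    = map_mx (meval (coords nu)) (rpow (@coord_var _) (map_mx (mpolyC _ (R := F)) a) k).
  rewrite map_rpow; congr rpow.
    by apply: functional_extensionality => t; rewrite /= mevalXU /coords enum_rankK.
  by apply/rowP => l'; rewrite !mxE; exact/esym/mevalC.
by rewrite mxE.
Qed.

Lemma rigid_nullfil : rigid_in (nilMonoLeib (n := n.+1)) (@nullfil F n).
Proof.
exists (fun p => exists a (l : 'I_n.+1),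
  p = rpow (@coord_var _) (map_mx (mpolyC _ (R := F)) a) n 0 l).
move=> nu nu_var; rewrite orbit_nullfilP //; split.
  move=> no_a p [a [l ->]]; rewrite meval_rpow_coord_var.
  have [->|xn_neq0] := eqVneq (rpow nu a n) 0; first by rewrite mxE.
  by case: no_a; exists a.
move=> rpow_zero [a]; apply/negP; rewrite negbK; apply/eqP/rowP => l.
by rewrite mxE -meval_rpow_coord_var; apply: rpow_zero; exists a, l.
Qed.

End Rigidity.

Import complex.

Theorem mainTheorem8 (R : realType) (n : nat) : (0 < n)%N ->
  exists mu : strconst R[i] n,
    nilMonoLeib mu /\ rigid_in (nilMonoLeib (n := n)) mu.
Proof.
case: n => [//|n] _; exists (@nullfil R[i] n).
by split; [apply: nullfil_nilMonoLeib | apply: rigid_nullfil].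
Qed.
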